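(* Let $\mathbb{E}$ be a finite-dimensional Euclidean space, $\mathcal{K}\subseteq\mathbb{E}$ a closed convex cone, $\mathcal{A}:\mathbb{E}\to\mathbb{R}^m$ a surjective linear map and $b\in\mathbb{R}^m$, and let $\mathcal{F}=\{x\in\mathcal{K}:\mathcal{A}x=b\}\neq\emptyset$. Suppose strict feasibility fails for $\mathcal{F}$ and let $\bar{\mathcal{K}}$ be the cone obtained by the facial reduction process. Then $\mathcal{A}(\operatorname{span}\bar{\mathcal{K}})$ is a subspace of dimension at most $m-\operatorname{maxsd}(\mathcal{F})$. Moreover, $\{x\in\bar{\mathcal{K}}:\mathcal{A}x=b\}$ contains at least $\operatorname{maxsd}(\mathcal{F})$ implicitly redundant constraints, i.e. $m-\dim\mathcal{A}(\operatorname{span}\bar{\mathcal{K}})\ge\operatorname{maxsd}(\mathcal{F})$.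
   Context: Strict feasibility of $\{x\in C:\mathcal{A}x=b\}$ with respect to a closed convex cone $C$ means that this set contains a point of $\operatorname{relint}(C)$. For a cone $C$, $C^*$ is its dual cone and $C^\perp$ its orthogonal complement. Facial reduction process: set $\mathcal{K}^0=\mathcal{K}$, $k=0$; while strict feasibility fails for $\{x\in\mathcal{K}^k:\mathcal{A}x=b\}$ with respect to $\mathcal{K}^k$, increase $k$ by one, choose $y^k\in\mathbb{R}^m$ with $\mathcal{A}^*y^k\in(\mathcal{K}^{k-1})^*\setminus(\mathcal{K}^{k-1})^\perp$ and $\langle b,y^k\rangle=0$, and set $\mathcal{K}^k=\mathcal{K}^{k-1}\cap(\mathcal{A}^*y^k)^\perp$. The cone obtained by the process is the final $\bar{\mathcal{K}}=\mathcal{K}^k=\mathcal{K}\cap\bigcap_{i=1}^k(\mathcal{A}^*y^i)^\perp$. The max-singularity degree $\operatorname{maxsd}(\mathcal{F})$ is the largest number of (nontrivial) iterations over all runs of this facial reduction process on $\mathcal{F}$. The number of implicitly redundant constraints in $\{x\in\bar{\mathcal{K}}:\mathcal{A}x=b\}$ is the number of redundant equalities among $\mathcal{A}x=b$ when $x$ is restricted to $\operatorname{span}\bar{\mathcal{K}}$, i.e. $m$ minus the rank of $\mathcal{A}$ restricted to $\operatorname{span}\bar{\mathcal{K}}$. *)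

(* The Euclidean space E is modelled as R^n = 'rV[R]_n with the standard
   inner product; the linear map A : E -> R^m is x |-> x *m A with
   A : 'M[R]_(n, m); its adjoint is y |-> y *m A^T. *)
From HB Require Import structures.
From mathcomp Require Import all_boot all_order all_algebra.
From mathcomp Require Import all_classical all_reals all_analysis.
Set Implicit Arguments. Unset Strict Implicit. Unset Printing Implicit Defensive.
Import Order.TTheory GRing.Theory Num.Theory.
Import numFieldNormedType.Exports.
Local Open Scope classical_set_scope.
Local Open Scope ring_scope.

Section FR.
Variables (R : realType) (n m : nat).

Definition dotv (x y : 'rV[R]_n) : R := (x *m y^T) 0 0.

Definition closed_convex_cone (C : set 'rV[R]_n) : Prop :=
  [/\ C 0,
      (forall x y, C x -> C y -> C (x + y)),
      (forall (t : R) x, 0 <= t -> C x -> C (t *: x)) &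
      closed (C : set 'rV[R]_n)].

Definition span (C : set 'rV[R]_n) : set 'rV[R]_n :=
  [set y | exists (k : nat) (c : 'I_k -> R) (v : 'I_k -> 'rV[R]_n),
           (forall i, C (v i)) /\ y = \sum_(i < k) c i *: v i].

(* relative interior (interior relative to the affine hull, which for a
   cone containing 0 is its span) *)
Definition relint (C : set 'rV[R]_n) : set 'rV[R]_n :=
  [set x | C x /\ exists U : set 'rV[R]_n, nbhs x U /\ (U `&` span C `<=` C)].

Definition in_dual (C : set 'rV[R]_n) (a : 'rV[R]_n) : Prop :=
  forall x, C x -> 0 <= dotv a x.
Definition in_perp (C : set 'rV[R]_n) (a : 'rV[R]_n) : Prop :=
  forall x, C x -> dotv a x = 0.

Variables (A : 'M[R]_(n, m)) (b : 'rV[R]_m).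

Definition strictly_feasible (C : set 'rV[R]_n) : Prop :=
  exists x, relint C x /\ x *m A = b.

Definition fr_step (C : set 'rV[R]_n) (y : 'rV[R]_m) : set 'rV[R]_n :=
  C `&` [set x | dotv (y *m A^T) x = 0].

Definition fr_cone (C : set 'rV[R]_n) (ys : seq 'rV[R]_m) : set 'rV[R]_n :=
  foldl fr_step C ys.

Fixpoint fr_valid (C : set 'rV[R]_n) (ys : seq 'rV[R]_m) : Prop :=
  match ys with
  | [::] => True
  | y :: ys' =>
      [/\ ~ strictly_feasible C,
          in_dual C (y *m A^T),
          ~ in_perp C (y *m A^T),
          (b *m y^T) 0 0 = 0 &
          fr_valid (fr_step C y) ys']
  end.

Definition fr_run (K : set 'rV[R]_n) (ys : seq 'rV[R]_m) : Prop :=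
  fr_valid K ys /\ strictly_feasible (fr_cone K ys).

(* Every run has at most n iterations (each step strictly lowers the
   dimension of the span), so the maximum over d <= n is the true maximum. *)
Definition maxsd (K : set 'rV[R]_n) : nat :=
  (\max_(d < n.+1 | `[< exists ys, fr_run K ys /\ size ys = d >]) (d : nat))%N.

End FR.

Definition is_subspace (R : realType) (m : nat) (S : set 'rV[R]_m) : Prop :=
  [/\ S 0, (forall x y, S x -> S y -> S (x + y)) &
      (forall (t : R) x, S x -> S (t *: x))].

Definition dim_set (R : realType) (m : nat) (S : set 'rV[R]_m) : nat :=
  (\max_(k < m.+1 | `[< exists M : 'M[R]_(k, m),
                         row_free M /\ forall i, S (row i M) >]) (k : nat))%N.

Definition image_span (R : realType) (n m : nat) (A : 'M[R]_(n, m))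
  (C : set 'rV[R]_n) : set 'rV[R]_m :=
  [set z | exists x, span C x /\ z = x *m A].

(* Let K̄ be the cone reached by a run that ends at a relative interior point
   x0 with A x0 = b, and let y1, ..., yd be the steps of any other run.
   Each A^* yi lies in the dual of the current cone, which contains K̄, and is
   orthogonal to x0; since x0 is relatively interior, A^* yi vanishes on all
   of K̄.  Hence A(span K̄) is orthogonal to W = span(y1, ..., yd).  Along a
   run every new A^* yi is nonzero on the current cone while the earlier ones
   vanish there, so yi is not in the span of y1, ..., y(i-1) and dim W = d.
   Orthogonality then gives dim A(span K̄) + d <= m, and taking d = maxsd
   yields both inequalities. *)
From Pilot Require Import Defs.
From HB Require Import structures.
From mathcomp Require Import all_boot all_order all_algebra.
From mathcomp Require Import all_classical all_reals all_analysis.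
From mathcomp Require Import lra zify.
Set Implicit Arguments. Unset Strict Implicit. Unset Printing Implicit Defensive.
Import Order.TTheory GRing.Theory Num.Theory.
Import numFieldNormedType.Exports.
Local Open Scope classical_set_scope.
Local Open Scope ring_scope.

Section Cones.
Variables (R : realType) (n : nat).
Implicit Types (C : set 'rV[R]_n) (a x : 'rV[R]_n).

Lemma subset_span C : C `<=` Defs.span C.
Proof.
move=> x Cx; exists 1%N, (fun=> 1), (fun=> x); split => //.
by rewrite big_ord1 scale1r.
Qed.

Lemma span0 C : Defs.span C 0.
Proof.
by exists 0%N, (fun=> 0), (fun=> 0); split; [case | rewrite big_ord0].
Qed.

Lemma spanD C x x' : Defs.span C x -> Defs.span C x' -> Defs.span C (x + x').
Proof.
move=> [k1 [c1 [v1 [Cv1 ->]]]] [k2 [c2 [v2 [Cv2 ->]]]].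
pose pick T (f1 : 'I_k1 -> T) (f2 : 'I_k2 -> T) (i : 'I_(k1 + k2)) :=
  match fintype.split i with
  | inl j => f1 j | inr j => f2 j end.
exists (k1 + k2)%N, (pick _ c1 c2), (pick _ v1 v2); split.
  by move=> i; rewrite /pick; case: (fintype.split i).
rewrite big_split_ord /pick; congr (_ + _); apply: eq_bigr => i _.
  by have /= -> := unsplitK (inl i : 'I_k1 + 'I_k2).
by have /= -> := unsplitK (inr i : 'I_k1 + 'I_k2).
Qed.

Lemma spanZ C (t : R) x : Defs.span C x -> Defs.span C (t *: x).
Proof.
move=> [k [c [v [Cv ->]]]]; exists k, (fun i => t * c i), v; split => //.
by rewrite scaler_sumr; apply: eq_bigr => i _; rewrite scalerA.
Qed.

Lemma dotv0l x : dotv 0 x = 0.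
Proof. by rewrite /dotv mul0mx mxE. Qed.

Lemma dotvDl a a' x : dotv (a + a') x = dotv a x + dotv a' x.
Proof. by rewrite /dotv mulmxDl mxE. Qed.

Lemma dotvZl (t : R) a x : dotv (t *: a) x = t * dotv a x.
Proof. by rewrite /dotv -scalemxAl mxE. Qed.

Lemma dotv0r a : dotv a 0 = 0.
Proof. by rewrite /dotv trmx0 mulmx0 mxE. Qed.

Lemma dotvDr a x x' : dotv a (x + x') = dotv a x + dotv a x'.
Proof. by rewrite /dotv linearD /= mulmxDr mxE. Qed.

Lemma dotvZr (t : R) a x : dotv a (t *: x) = t * dotv a x.
Proof. by rewrite /dotv linearZ /= -scalemxAr mxE. Qed.

Lemma perp_span C a : in_perp C a -> in_perp (Defs.span C) a.
Proof.
move=> Ca x [k [c [v [Cv ->]]]].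
elim/big_rec: _ => [|i y _ ay]; first exact: dotv0r.
by rewrite dotvDr dotvZr Ca // mulr0 add0r.
Qed.

(* If a were positive at some x in C, then x0 - t x would leave C for small
   t > 0, although it stays in span C near x0. *)
Lemma relint_dual_perp C x0 a :
  relint C x0 -> in_dual C a -> dotv a x0 = 0 -> in_perp C a.
Proof.
move=> [Cx0 [U [/nbhs_ballP [e /= e_gt0 Ue] UC]]] Ca ax0 x Cx.
have := Ca x Cx; rewrite le_eqVlt => /orP[/eqP <- //|ax_gt0].
pose t := e / (2 * (`|x| + 1)).
have t_gt0 : 0 < t by rewrite divr_gt0 // mulr_gt0 // ltr_wpDl.
have tx_lt_e : `|t *: x| < e.
  rewrite normrZ gtr0_norm // /t mulrAC ltr_pdivrMr ?mulr_gt0 ?ltr_wpDl //.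
  by have := normr_ge0 x; nra.
have C_x0_tx : C (x0 - t *: x).
  apply: UC; split.
    by apply: Ue; rewrite -ball_normE /ball_ /= opprB addrC subrK.
  apply: spanD; first exact: subset_span Cx0.
  by rewrite -scaleNr; apply/spanZ/subset_span.
have := Ca _ C_x0_tx; rewrite dotvDr -scaleNr dotvZr ax0 add0r mulNr oppr_ge0.
by rewrite pmulr_rle0 // leNgt ax_gt0.
Qed.

End Cones.

Lemma mxrank_orthogonal (F : fieldType) p q m
    (M : 'M[F]_(p, m)) (W : 'M[F]_(q, m)) :
  M *m W^T = 0 -> (\rank M + \rank W <= m)%N.
Proof.
move=> MW0; have : (W <= kermx M^T)%MS.
  by rewrite sub_kermx -[W in W *m _]trmxK -trmx_mul MW0 trmx0.
move/mxrankS; rewrite mxrank_ker mxrank_tr.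
have := rank_leq_col M; lia.
Qed.

Lemma mxrank_addsmx_rV (F : fieldType) p m (P : 'M[F]_(p, m)) (y : 'rV[F]_m) :
  ~~ (y <= P)%MS -> \rank (P + y)%MS = (\rank P).+1.
Proof.
move=> yNP; apply/eqP; rewrite eqn_leq.
have PltPy : (P < P + y)%MS by rewrite ltmxE addsmxSl addsmx_sub submx_refl.
rewrite (rank_ltmx PltPy) andbT.
have [Py_le _] := mxrank_adds_leqif P y.
apply: leq_trans Py_le _.
by rewrite -[X in (_ <= X)%N]addn1 leq_add2l rank_leq_row.
Qed.

Section FacialReduction.
Variables (R : realType) (n m : nat) (A : 'M[R]_(n, m)) (b : 'rV[R]_m).
Implicit Types (C : set 'rV[R]_n) (zs : seq 'rV[R]_m).

Lemma dotv_adj (y : 'rV[R]_m) x : dotv (y *m A^T) x = (x *m A *m y^T) 0 0.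
Proof.
rewrite /dotv; have -> : y *m A^T *m x^T = (x *m A *m y^T)^T.
  by rewrite !trmx_mul trmxK mulmxA.
by rewrite mxE.
Qed.

Lemma is_subspace_image_span C : is_subspace (image_span A C).
Proof.
split.
- by exists 0; split; [exact: span0 | rewrite mul0mx].
- move=> _ _ [x1 [s1 ->]] [x2 [s2 ->]].
  by exists (x1 + x2); split; [exact: spanD | rewrite mulmxDl].
- move=> t _ [x [sx ->]].
  by exists (t *: x); split; [exact: spanZ | rewrite scalemxAl].
Qed.

Definition perpmx C p (W : 'M[R]_(p, m)) :=
  forall w, (w <= W)%MS -> in_perp C (w *m A^T).

Lemma perpmx0 C p : perpmx C (0 : 'M[R]_(p, m)).
Proof. by move=> _ /submx0null -> x _; rewrite mul0mx dotv0l. Qed.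

Lemma perpmx_adds C p q (P : 'M[R]_(p, m)) (Q : 'M[R]_(q, m)) :
  perpmx C P -> perpmx C Q -> perpmx C (P + Q)%MS.
Proof.
move=> CP CQ _ /sub_addsmxP [[u1 u2] /= ->] x Cx.
by rewrite mulmxDl dotvDl CP ?CQ ?submxMl // addr0.
Qed.

Lemma perpmx_rV C (y : 'rV[R]_m) : in_perp C (y *m A^T) -> perpmx C y.
Proof.
by move=> Cy _ /sub_rVP [c ->] x Cx; rewrite -scalemxAl dotvZl Cy ?mulr0.
Qed.

Lemma perpmxS C C' p (W : 'M[R]_(p, m)) :
  C' `<=` C -> perpmx C W -> perpmx C' W.
Proof. by move=> C'C CW w wW x /C'C; apply: CW. Qed.

Lemma perpmx_image_span C p (W : 'M[R]_(p, m)) z :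
  perpmx C W -> image_span A C z -> z *m W^T = 0.
Proof.
move=> CW [x [Cx ->]]; apply/rowP => j.
rewrite [RHS]mxE -(perp_span (CW _ (row_sub j W)) Cx) dotv_adj tr_row.
by rewrite !mxE; apply: eq_bigr => k _; rewrite !mxE.
Qed.

Lemma fr_cone_sub C zs : fr_cone A C zs `<=` C.
Proof. by elim: zs C => [|y zs IH] C x //= /IH []. Qed.

Fixpoint fr_dirmx zs : 'M[R]_m :=
  if zs is y :: zs' then (y + fr_dirmx zs')%MS else 0.

Lemma perpmx_fr_cone C zs : perpmx (fr_cone A C zs) (fr_dirmx zs).
Proof.
elim: zs C => [|y zs IH] C /=; first exact: perpmx0.
apply: perpmx_adds; last exact: IH.
by apply/perpmx_rV => x /fr_cone_sub [].
Qed.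

Lemma mxrank_fr_dirmx_adds C p (P : 'M[R]_(p, m)) zs :
  fr_valid A b C zs -> perpmx C P ->
  \rank (P + fr_dirmx zs)%MS = (\rank P + size zs)%N.
Proof.
elim: zs C p P => [|y zs IH] C p P /=.
  by rewrite addsmx0 addn0.
move=> [_ _ CNy _ valid_zs] CP.
have yNP : ~~ (y <= P)%MS by apply: contra_notN CNy => /CP.
rewrite addsmxA (IH (fr_step A C y)) //.
  by rewrite mxrank_addsmx_rV // addSnnS.
apply: perpmx_adds; first by apply: perpmxS CP => x [].
by apply/perpmx_rV => x [].
Qed.

Lemma mxrank_fr_dirmx C zs : fr_valid A b C zs -> \rank (fr_dirmx zs) = size zs.
Proof.
move=> valid_zs.
have := mxrank_fr_dirmx_adds valid_zs (perpmx0 (C := C) (p := 0)).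
by rewrite adds0mx mxrank0.
Qed.

Lemma sub_fr_cone Kb C x0 zs : relint Kb x0 -> x0 *m A = b ->
  Kb `<=` C -> fr_valid A b C zs -> Kb `<=` fr_cone A C zs.
Proof.
move=> Kb_x0 Ax0; elim: zs C => [//|y zs IH] C KbC /= [_ Cy _ by0 valid_zs].
apply: IH => // x Kbx; split; first exact: KbC.
have y_dual : in_dual Kb (y *m A^T) by move=> z /KbC /Cy.
have y_x0 : dotv (y *m A^T) x0 = 0 by rewrite dotv_adj Ax0.
exact: relint_dual_perp Kb_x0 y_dual y_x0 x Kbx.
Qed.

Lemma image_span_fr_valid_leq K Kb x0 zs k (M : 'M[R]_(k, m)) :
  relint Kb x0 -> x0 *m A = b -> Kb `<=` K -> fr_valid A b K zs ->
  row_free M -> (forall i, image_span A Kb (row i M)) -> (k + size zs <= m)%N.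
Proof.
move=> Kb_x0 Ax0 KbK valid_zs free_M M_Kb.
have Kb_W : perpmx Kb (fr_dirmx zs).
  apply: perpmxS (sub_fr_cone Kb_x0 Ax0 KbK valid_zs) _.
  exact: perpmx_fr_cone.
have MW0 : M *m (fr_dirmx zs)^T = 0.
  by apply/row_matrixP => i; rewrite row_mul row0 (perpmx_image_span Kb_W).
have := mxrank_orthogonal MW0.
by rewrite (eqP free_M) (mxrank_fr_dirmx valid_zs).
Qed.

End FacialReduction.

Theorem corollary4p2 (R : realType) (n m : nat)
  (K : set 'rV[R]_n) (A : 'M[R]_(n, m)) (b : 'rV[R]_m)
  (ys : seq 'rV[R]_m) :
  closed_convex_cone K ->
  row_full A ->
  (exists x, K x /\ x *m A = b) ->
  ~ strictly_feasible A b K ->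
  fr_run A b K ys ->
  let S := image_span A (fr_cone A K ys) in
  [/\ is_subspace S,
      (dim_set S <= m - maxsd A b K)%N &
      (maxsd A b K <= m - dim_set S)%N].
Proof.
move=> _ _ _ _ [_ [x0 [Kb_x0 Ax0]]] S.
have KbK : fr_cone A K ys `<=` K := fr_cone_sub (C := K) (zs := ys).
have dimS_le_m : (dim_set S <= m)%N.
  by apply/bigmax_leqP => k _; rewrite -ltnS.
have : (maxsd A b K <= m - dim_set S)%N.
  apply/bigmax_leqP => d /asboolP [zs [[valid_zs _] <-]].
  have zs_le_m : (size zs <= m)%N.
    by rewrite -(mxrank_fr_dirmx valid_zs) rank_leq_col.
  suff : (dim_set S <= m - size zs)%N by lia.
  apply/bigmax_leqP => k /asboolP [M [free_M M_S]].
  have := image_span_fr_valid_leq Kb_x0 Ax0 KbK valid_zs free_M M_S; lia.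
by split; [exact: is_subspace_image_span | lia | lia].
Qed.
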